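(* Let $G$ be a finitely generated group with a finite generating subset $S$, and let $X_1,\dots,X_k$ be proper, non-empty, separable subsets of $G$. If $Y=\bigcup_{i=1}^kX_i$, then $\mathrm{Farb}_{G,Y,S}(n)\preceq\prod_{i=1}^k\mathrm{Farb}_{G,X_i,S}(n)$.
   Context: For $X\subseteq G$ and $y\in G\setminus X$, $D_G(X,y)$ is the minimal order $|Q|$ of a finite group $Q$ with a surjective homomorphism $\pi:G\to Q$ such that $\pi(y)\notin\pi(X)$ ($\infty$ if none). A non-empty subset $X$ is separable if $D_G(X,y)<\infty$ for all $y\in G\setminus X$. $\mathrm{Farb}_{G,X,S}(n)=\max\{D_G(X,g): g\in G\setminus X,\ \|g\|_S\le n\}$ with $\max\emptyset=0$, where $\|\cdot\|_S$ is word length. $f\preceq g$ means there is $C$ with $f(n)\le C\,g(Cn)$ for all $n$. *)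

From Stdlib Require Import ClassicalEpsilon.
From mathcomp Require Import all_boot all_fingroup.

Set Implicit Arguments.
Unset Strict Implicit.
Unset Printing Implicit Defensive.

Definition pb (P : Prop) : bool :=
  if excluded_middle_informative P then true else false.

Lemma pbP (P : Prop) : reflect P (pb P).
Proof. by rewrite /pb; case: excluded_middle_informative => h; constructor. Qed.

Lemma ex_pb (P : nat -> Prop) : (exists m, P m) -> exists m, pb (P m).
Proof. by case=> m hm; exists m; apply/pbP. Qed.

(* extended naturals: [None] stands for infinity *)
Definition ole (a b : option nat) : Prop :=
  match a, b with
  | _, None => True
  | None, Some _ => False
  | Some a, Some b => (a <= b)%N
  end.

Definition emul (a b : option nat) : option nat :=
  match a, b with
  | Some a, Some b => Some (a * b)%N
  | _, _ => None
  end.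

Definition is_hom (G : groupType) (Q : finGroupType) (pi : G -> Q) : Prop :=
  forall x y : G, pi (x * y)%g = (pi x * pi y)%g.

Definition separating_quotient (G : groupType) (X : G -> Prop) (y : G) (m : nat)
  : Prop :=
  exists (Q : finGroupType) (pi : G -> Q),
    [/\ is_hom pi, (forall q : Q, exists g, pi g = q), #|Q| = m
      & ~ (exists x, X x /\ pi x = pi y)].

Definition Dsep (G : groupType) (X : G -> Prop) (y : G) : option nat :=
  match excluded_middle_informative (exists m, separating_quotient X y m) with
  | left h => Some (ex_minn (ex_pb h))
  | right _ => None
  end.

Definition wlen_le (G : groupType) (S : seq G) (g : G) (n : nat) : Prop :=
  exists w : seq (bool * G),
    [/\ (size w <= n)%N, all (fun p => p.2 \in S) w
      & g = foldr (fun p acc => ((if p.1 then p.2^-1 else p.2) * acc)%g) 1%g w].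

Definition generates (G : groupType) (S : seq G) : Prop :=
  forall g : G, exists n, wlen_le S g n.

Definition separable (G : groupType) (X : G -> Prop) : Prop :=
  (exists x, X x) /\ forall y, ~ X y -> Dsep X y <> None.

Definition proper_subset (G : groupType) (X : G -> Prop) : Prop :=
  exists g, ~ X g.

(* Farb_{G,X,S}(n) = max { D_G(X,g) : g \notin X, ||g||_S <= n }, max of the
   empty set being 0.  The set is finite (S finite), so the max is the least
   upper bound, computed here as the least m bounding all these values
   (None = infinity if some value is infinite). *)
Definition Farb (G : groupType) (S : seq G) (X : G -> Prop) (n : nat)
  : option nat :=
  match excluded_middle_informative
          (exists m, forall g, ~ X g -> wlen_le S g n -> ole (Dsep X g) (Some m))
  with
  | left h => Some (ex_minn (ex_pb h))
  | right _ => None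
  end.

Definition dom_le (f g : nat -> option nat) : Prop :=
  exists C : nat, forall n, ole (f n) (emul (Some C) (g (C * n)%N)).

(* If pi_i : G -> Q_i separates g from X_i, the diagonal map G -> Q_1 x ... x Q_k
   separates g from the union Y, and its image has order at most the product of
   the |Q_i|.  Hence D_G(Y, g) <= prod_i D_G(X_i, g) <= prod_i Farb_{G,X_i,S}(n)
   whenever ||g||_S <= n, so the domination holds with constant 1.  Since the
   value infinity is allowed, this needs neither separability, nor generation,
   nor k > 0: those hypotheses only make the right-hand side finite. *)
From Stdlib Require Import ClassicalEpsilon.
From mathcomp Require Import all_boot all_fingroup.

Set Implicit Arguments.
Unset Strict Implicit.
Unset Printing Implicit Defensive.

Lemma ole_refl (a : option nat) : ole a a.
Proof. by case: a => /=. Qed.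

Lemma ole_top (a : option nat) : ole a None.
Proof. by case: a. Qed.

Lemma ole_trans (a b c : option nat) : ole a b -> ole b c -> ole a c.
Proof. by case: a b c => [a|] [b|] [c|] //=; apply: leq_trans. Qed.

Lemma ole_emul (a a' b b' : option nat) :
  ole a a' -> ole b b' -> ole (emul a b) (emul a' b').
Proof. by case: a a' b b' => [a|] [a'|] [b|] [b'|] //=; apply: leq_mul. Qed.

Lemma emul1e : left_id (Some 1%N) emul.
Proof. by case=> //= m; rewrite mul1n. Qed.

Lemma ole_big_emul (I : Type) (r : seq I) (P : pred I) (F F' : I -> option nat) :
  (forall i, P i -> ole (F i) (F' i)) ->
  ole (\big[emul/Some 1%N]_(i <- r | P i) F i)
      (\big[emul/Some 1%N]_(i <- r | P i) F' i).
Proof. by move=> leFF'; apply: big_ind2 => //; apply: ole_emul. Qed.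

Lemma is_hom1 (G : groupType) (Q : finGroupType) (pi : G -> Q) :
  is_hom pi -> pi 1%g = 1%g.
Proof. by move=> hom_pi; apply: (@mulgI _ (pi 1%g)); rewrite -hom_pi !mulg1. Qed.

Section SeparatingQuotients.

Variable G : groupType.
Implicit Types (A B X : G -> Prop) (y : G).

Lemma separating_quotient_sub A B y m :
  (forall x, A x -> B x) -> separating_quotient B y m -> separating_quotient A y m.
Proof.
move=> sAB [Q [pi [hom_pi onto_pi cardQ sep_pi]]]; exists Q, pi; split=> // -[x [Ax e]].
by apply: sep_pi; exists x; split=> //; apply: sAB.
Qed.

Lemma separating_quotient0 y : separating_quotient (fun _ => False) y 1.
Proof.
pose T := (1%G : {group {perm bool}}).
exists (subg_of T), (fun _ => 1%g); split.
- by move=> a b; rewrite mulg1.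
- move=> q; exists 1%g; apply: val_inj => /=.
  by have := subgP q; rewrite inE => /eqP ->.
- by rewrite card_sub cards1.
- by case=> x [[]].
Qed.

Lemma separating_quotientU A B y m1 m2 :
  separating_quotient A y m1 -> separating_quotient B y m2 ->
  exists2 m, (m <= m1 * m2)%N & separating_quotient (fun x => A x \/ B x) y m.
Proof.
case=> Q1 [p1 [hom1 _ card1 sep1]]; case=> Q2 [p2 [hom2 _ card2 sep2]].
pose P g := ((p1 g, p2 g) : (Q1 * Q2)%type).
have homP a b : P (a * b)%g = (P a * P b)%g by rewrite /P hom1 hom2.
pose H := [set q | pb (exists g, P g = q)].
have memH g : P g \in H by rewrite inE; apply/pbP; exists g.
have groupH : group_set H.
  apply/group_setP; split.
    by rewrite inE; apply/pbP; exists 1%g; rewrite /P (is_hom1 hom1) (is_hom1 hom2).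
  by move=> _ _ /[!inE] /pbP[a <-] /pbP[b <-]; apply/pbP; exists (a * b)%g.
pose HG := Group groupH.
exists #|HG|; first by rewrite -card1 -card2 -card_prod max_card.
exists (subg_of HG), (fun g => subg HG (P g)); split.
- by move=> a b; rewrite -subgM ?memH // homP.
- move=> q; have := subgP q; rewrite inE => /pbP[g eg].
  by exists g; rewrite eg sgvalK.
- by rewrite card_sub.
- case=> x [ABx /congr_subg]; rewrite !subgK ?memH // => -[e1 e2].
  by case: ABx => [Ax|Bx]; [apply: sep1 | apply: sep2]; exists x.
Qed.

Lemma Dsep_separating X y d : Dsep X y = Some d -> separating_quotient X y d.
Proof.
rewrite /Dsep; case: excluded_middle_informative => // h [<-].
by case: ex_minnP => d' /pbP.
Qed.

Lemma Dsep_min X y m : separating_quotient X y m -> ole (Dsep X y) (Some m).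
Proof.
move=> sep_m; rewrite /Dsep; case: excluded_middle_informative => [h|[]]; last by exists m.
by case: ex_minnP => d _; apply; apply/pbP.
Qed.

Lemma Dsep_sub A B y : (forall x, A x -> B x) -> ole (Dsep A y) (Dsep B y).
Proof.
move=> sAB; case eB: (Dsep B y) => [d|]; last exact: ole_top.
exact: Dsep_min (separating_quotient_sub sAB (Dsep_separating eB)).
Qed.

Lemma DsepU A B y : ole (Dsep (fun x => A x \/ B x) y) (emul (Dsep A y) (Dsep B y)).
Proof.
case eA: (Dsep A y) => [d1|]; last exact: ole_top.
case eB: (Dsep B y) => [d2|]; last exact: ole_top.
have [m le_m sep_m] :=
  separating_quotientU (Dsep_separating eA) (Dsep_separating eB).
exact: ole_trans (Dsep_min sep_m) (le_m : ole (Some m) (Some (d1 * d2))).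
Qed.

Lemma Dsep_bigcup (I : eqType) (X : I -> G -> Prop) (r : seq I) y :
  ole (Dsep (fun x => exists2 i, i \in r & X i x) y)
      (\big[emul/Some 1%N]_(i <- r) Dsep (X i) y).
Proof.
elim: r => [|i r IHr].
  rewrite big_nil; apply: ole_trans (Dsep_min (separating_quotient0 y)).
  by apply: Dsep_sub => x [].
have sub_cons x : (exists2 j, j \in i :: r & X j x) ->
    X i x \/ exists2 j, j \in r & X j x.
  by case=> j; rewrite in_cons => /orP[/eqP -> | jr] Xj; [left | right; exists j].
rewrite big_cons; apply: ole_trans (Dsep_sub _ sub_cons) _.
exact: ole_trans (DsepU _ _ _) (ole_emul (ole_refl _) IHr).
Qed.

Variable S : seq G.

Lemma Dsep_le_Farb X g n : ~ X g -> wlen_le S g n -> ole (Dsep X g) (Farb S X n).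
Proof.
move=> nXg len_g; rewrite /Farb; case: excluded_middle_informative => [h|_].
  by case: ex_minnP => M /pbP bound _; apply: bound.
exact: ole_top.
Qed.

Lemma Farb_le X n b :
  (forall g, ~ X g -> wlen_le S g n -> ole (Dsep X g) b) -> ole (Farb S X n) b.
Proof.
case: b => [M|] leM; last exact: ole_top.
rewrite /Farb; case: excluded_middle_informative => [h|[]].
  by case: ex_minnP => d _; apply; apply/pbP.
by exists M.
Qed.

End SeparatingQuotients.

Theorem mainTheorem20 (G : groupType) (S : seq G) (k : nat)
    (X : 'I_k -> G -> Prop) :
  generates S ->
  (0 < k)%N ->
  (forall i, proper_subset (X i) /\ separable (X i)) ->
  dom_le (Farb S (fun g => exists i, X i g))
         (fun n => \big[emul/Some 1%N]_(i < k) Farb S (X i) n).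
Proof.
move=> _ _ _; exists 1%N => n; rewrite mul1n emul1e.
apply: Farb_le => g Yg len_g.
have sub_bigcup x : (exists i, X i x) -> exists2 i, i \in index_enum 'I_k & X i x.
  by case=> i Xi; exists i; rewrite ?mem_index_enum.
apply: ole_trans (Dsep_sub _ sub_bigcup) (ole_trans (Dsep_bigcup _ _ _) _).
apply: ole_big_emul => i _; apply: Dsep_le_Farb => // Xig.
by apply: Yg; exists i.
Qed.
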